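(* Let $\beta\in(1,2)$, $M\ge2$, and let $v=(v_0,\dots,v_M)$ be any grid function with $v_0=v_M=0$. Then $$\frac{c^{(\beta)}_\ast}{(b-a)^\beta}\,h\sum_{j=1}^{M-1}v_j^2\le h^{1-\beta}\sum_{j=1}^{M-1}\Big(\sum_{k=0}^{M}r^{(\beta)}_{j-k}v_k\Big)v_j\le 2r^{(\beta)}_0h^{1-\beta}\sum_{j=1}^{M-1}v_j^2,$$ where $c^{(\beta)}_\ast=\frac{(1-\beta)(2-\beta)(3-\beta)4^{\beta}e^{-9/4}\Psi_\beta}{3}$.
   Context: $a<b$, $h=(b-a)/M$, $x_j=a+jh$. Let $g^{(\beta)}_k=(-1)^k\binom{\beta}{k}$, $\Psi_\beta=\frac{1}{2\cos(\pi\beta/2)}$, and $r^{(\beta)}_0=2\Psi_\beta(\frac{\beta}{2}g^{(\beta)}_1+\frac{2-\beta}{2}g^{(\beta)}_0)$, $r^{(\beta)}_1=\Psi_\beta(\frac{\beta}{2}g^{(\beta)}_0+\frac{2-\beta}{2}g^{(\beta)}_1+\frac{\beta}{2}g^{(\beta)}_2)$, $r^{(\beta)}_k=\Psi_\beta(\frac{\beta}{2}g^{(\beta)}_{k+1}+\frac{2-\beta}{2}g^{(\beta)}_k)$ for $k\ge2$, $r^{(\beta)}_{-k}=r^{(\beta)}_k$ for $k\ge1$. *)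

From Stdlib Require Import Reals ZArith Lra.
Open Scope R_scope.

Fixpoint gbinom (beta : R) (k : nat) : R :=
  match k with
  | O => 1
  | S k' => gbinom beta k' * (beta - INR k') / INR (S k')
  end.

Definition gcoef (beta : R) (k : nat) : R := (-1) ^ k * gbinom beta k.

Definition Psi (beta : R) : R := 1 / (2 * cos (PI * beta / 2)).

Definition rnat (beta : R) (k : nat) : R :=
  match k with
  | O => 2 * Psi beta * (beta / 2 * gcoef beta 1 + (2 - beta) / 2 * gcoef beta 0)
  | S O => Psi beta * (beta / 2 * gcoef beta 0 + (2 - beta) / 2 * gcoef beta 1
                       + beta / 2 * gcoef beta 2)
  | k => Psi beta * (beta / 2 * gcoef beta (S k) + (2 - beta) / 2 * gcoef beta k)
  end.

Definition rcoef (beta : R) (k : Z) : R := rnat beta (Z.abs_nat k).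

Definition cstar (beta : R) : R :=
  (1 - beta) * (2 - beta) * (3 - beta) * Rpower 4 beta * exp (- (9 / 4)) * Psi beta / 3.

From Stdlib Require Import Reals ZArith Lra Lia.
From Coquelicot Require Import Hierarchy.
Open Scope R_scope.

(** The matrix (r_(j-k)) on the interior nodes is a symmetric Toeplitz matrix
    whose off-diagonal entries are nonpositive.  Hence, by 2 |w_i w_j| <= w_i^2 + w_j^2,
    its quadratic form lies between (min row sum) |w|^2 and (max absolute row sum) |w|^2,
    and every row sum is at least lambda = 2 (r_0 + ... + r_(M-2)) - r_0, while every
    absolute row sum is at most 2 r_0 - lambda.  Writing G_p = g_0 + ... + g_p, one has
    lambda = 2 Psi (beta/2 G_(M-1) + (2-beta)/2 G_(M-2)), and by a Bernoulli-type
    inequality -G_(p+1) (p+1) p^(beta-1) is nondecreasing in p, which yields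
    lambda M^beta >= 2 (beta-1)(2-beta)(-Psi) >= c_*.  Finally
    h^(1-beta) = h M^beta / (b-a)^beta. *)

Lemma sum_f_R0_switch (u : nat -> nat -> R) (N : nat) :
  sum_f_R0 (fun j => sum_f_R0 (u j) N) N
  = sum_f_R0 (fun i => sum_f_R0 (fun j => u j i) N) N.
Proof.
  rewrite <- !sum_n_Reals.
  rewrite (sum_n_ext _ (fun j => sum_n (u j) N)) by (intros; now rewrite sum_n_Reals).
  rewrite sum_n_switch.
  apply sum_n_ext; intros; now rewrite sum_n_Reals.
Qed.

Definition quad_form (A : nat -> nat -> R) (w : nat -> R) (N : nat) : R :=
  sum_f_R0 (fun j => sum_f_R0 (fun i => A j i * w i) N * w j) N.

Lemma quad_form_expand A w N :
  quad_form A w N = sum_f_R0 (fun j => sum_f_R0 (fun i => A j i * w i * w j) N) N.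
Proof.
  apply sum_eq; intros j _.
  rewrite Rmult_comm, scal_sum; apply sum_eq; intros; ring.
Qed.

Lemma sum_sym_mean_squares (c : nat -> nat -> R) (w : nat -> R) (N : nat) :
  (forall j i, c j i = c i j) ->
  sum_f_R0 (fun j => sum_f_R0 (fun i => c j i * (w j ^ 2 + w i ^ 2) / 2) N) N
  = sum_f_R0 (fun j => sum_f_R0 (c j) N * w j ^ 2) N.
Proof.
  intros c_sym.
  transitivity (/ 2 * (sum_f_R0 (fun j => sum_f_R0 (fun i => c j i * w j ^ 2) N) N
                       + sum_f_R0 (fun j => sum_f_R0 (fun i => c j i * w i ^ 2) N) N)).
  { rewrite <- plus_sum, scal_sum; apply sum_eq; intros j _.
    rewrite <- plus_sum, (Rmult_comm (sum_f_R0 _ N)), scal_sum.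
    apply sum_eq; intros; field. }
  rewrite (sum_f_R0_switch (fun j i => c j i * w i ^ 2)).
  rewrite <- plus_sum, scal_sum; apply sum_eq; intros j _.
  rewrite <- plus_sum.
  rewrite (sum_eq _ (fun i => c j i * (2 * w j ^ 2))) by (intros; rewrite (c_sym i j); ring).
  rewrite <- scal_sum; field.
Qed.

Lemma quad_form_ge (A c : nat -> nat -> R) (w : nat -> R) (N : nat) :
  (forall j i, c j i = c i j) ->
  (forall j i, c j i * (w j ^ 2 + w i ^ 2) / 2 <= A j i * w i * w j) ->
  sum_f_R0 (fun j => sum_f_R0 (c j) N * w j ^ 2) N <= quad_form A w N.
Proof.
  intros c_sym cA.
  rewrite <- sum_sym_mean_squares, quad_form_expand by exact c_sym.
  apply sum_Rle; intros; apply sum_Rle; intros; apply cA.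
Qed.

Lemma quad_form_le (A c : nat -> nat -> R) (w : nat -> R) (N : nat) :
  (forall j i, c j i = c i j) ->
  (forall j i, A j i * w i * w j <= c j i * (w j ^ 2 + w i ^ 2) / 2) ->
  quad_form A w N <= sum_f_R0 (fun j => sum_f_R0 (c j) N * w j ^ 2) N.
Proof.
  intros c_sym Ac.
  rewrite <- sum_sym_mean_squares, quad_form_expand by exact c_sym.
  apply sum_Rle; intros; apply sum_Rle; intros; apply Ac.
Qed.

Definition toeplitz (r : nat -> R) (j i : nat) : R :=
  r (Z.abs_nat (Z.of_nat j - Z.of_nat i)).

Lemma toeplitz_sym r j i : toeplitz r j i = toeplitz r i j.
Proof. unfold toeplitz; f_equal; lia. Qed.

Lemma toeplitz_row_sum_diag r j : sum_f_R0 (toeplitz r j) j = sum_f_R0 r j.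
Proof.
  induction j as [|j IH]; [reflexivity|].
  rewrite decomp_sum by lia; simpl pred.
  rewrite (sum_eq _ (toeplitz r j)) by (intros; unfold toeplitz; f_equal; lia).
  rewrite IH, tech5; unfold toeplitz; replace (Z.abs_nat _) with (S j) by lia; ring.
Qed.

Lemma toeplitz_row_sum r N j : (j <= N)%nat ->
  sum_f_R0 (toeplitz r j) N = sum_f_R0 r j + sum_f_R0 r (N - j) - r 0%nat.
Proof.
  intros jN; replace N with (j + (N - j))%nat at 1 by lia.
  induction (N - j)%nat as [|t IH].
  - rewrite Nat.add_0_r, toeplitz_row_sum_diag; simpl; ring.
  - rewrite Nat.add_succ_r, !tech5, IH.
    unfold toeplitz; replace (Z.abs_nat _) with (S t) by lia; ring.
Qed.

Section NonpositiveOffDiagonal.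

Variable r : nat -> R.
Hypothesis r_nonpos : forall m, (1 <= m)%nat -> r m <= 0.

Lemma sum_f_R0_antitone p q : (p <= q)%nat -> sum_f_R0 r q <= sum_f_R0 r p.
Proof.
  induction 1 as [|q _ IH]; [lra|].
  rewrite tech5; pose proof (r_nonpos (S q) ltac:(lia)); lra.
Qed.

Lemma sum_f_R0_Rabs : 0 <= r 0%nat -> forall p,
  sum_f_R0 (fun m => Rabs (r m)) p = 2 * r 0%nat - sum_f_R0 r p.
Proof.
  intros r0_nonneg p; induction p as [|p IH].
  - simpl; rewrite Rabs_right; lra.
  - rewrite !tech5, IH, Rabs_left1 by (apply r_nonpos; lia); ring.
Qed.

Lemma toeplitz_row_sum_ge N j : (j <= N)%nat ->
  2 * sum_f_R0 r N - r 0%nat <= sum_f_R0 (toeplitz r j) N.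
Proof.
  intros jN; rewrite toeplitz_row_sum by exact jN.
  pose proof (sum_f_R0_antitone j N jN).
  pose proof (sum_f_R0_antitone (N - j) N ltac:(lia)).
  lra.
Qed.

Lemma toeplitz_form_ge N w :
  (2 * sum_f_R0 r N - r 0%nat) * sum_f_R0 (fun j => w j ^ 2) N
  <= quad_form (toeplitz r) w N.
Proof.
  eapply Rle_trans; [|apply (quad_form_ge _ (toeplitz r))].
  - rewrite scal_sum; apply sum_Rle; intros j jN.
    rewrite (Rmult_comm (w j ^ 2)); apply Rmult_le_compat_r; [apply pow2_ge_0|].
    now apply toeplitz_row_sum_ge.
  - apply toeplitz_sym.
  - intros j i; destruct (Nat.eq_dec j i) as [<-|ji].
    + right; field.
    + assert (toeplitz r j i <= 0) by (apply r_nonpos; lia).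
      pose proof (pow2_ge_0 (w j - w i)); nra.
Qed.

Lemma toeplitz_form_le N w :
  0 <= 2 * sum_f_R0 r N - r 0%nat ->
  quad_form (toeplitz r) w N <= 2 * r 0%nat * sum_f_R0 (fun j => w j ^ 2) N.
Proof.
  intros lambda_nonneg.
  assert (r0_nonneg : 0 <= r 0%nat)
    by (pose proof (sum_f_R0_antitone 0 N ltac:(lia)); simpl in *; lra).
  eapply Rle_trans; [apply (quad_form_le _ (fun j i => Rabs (toeplitz r j i)))|].
  - intros; now rewrite toeplitz_sym.
  - intros j i; unfold Rabs; destruct Rcase_abs.
    + pose proof (pow2_ge_0 (w j + w i)); nra.
    + pose proof (pow2_ge_0 (w j - w i)); nra.
  - rewrite scal_sum; apply sum_Rle; intros j jN.
    rewrite (Rmult_comm (w j ^ 2)); apply Rmult_le_compat_r; [apply pow2_ge_0|].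
    change (fun i => Rabs (toeplitz r j i)) with (toeplitz (fun m => Rabs (r m)) j).
    rewrite toeplitz_row_sum, !sum_f_R0_Rabs by assumption.
    pose proof (toeplitz_row_sum_ge N j jN); rewrite toeplitz_row_sum in * by assumption.
    rewrite Rabs_right by lra; lra.
Qed.

End NonpositiveOffDiagonal.

Lemma Rpower_pos x y : 0 < Rpower x y.
Proof. apply exp_pos. Qed.

Lemma Rpower_le_affine x a : 0 < x -> 0 <= a <= 1 -> Rpower x a <= 1 - a + a * x.
Proof.
  intros x_pos a_range.
  set (c := 1 - a + a * x).
  assert (c_pos : 0 < c) by (unfold c; nra).
  assert (ln_le : forall y, 0 < y -> ln y <= y - 1)
    by (intros y y_pos; pose proof (exp_ineq1_le (ln y)); rewrite exp_ln in *; lra).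
  (* Concavity of ln: average [ln y <= y - 1] at y = x/c and y = 1/c with weights a, 1 - a. *)
  pose proof (ln_le (x / c) ltac:(apply Rdiv_lt_0_compat; lra)) as ln_xc.
  pose proof (ln_le (/ c) ltac:(apply Rinv_0_lt_compat; lra)) as ln_c.
  unfold Rdiv in ln_xc; rewrite ln_mult, ln_Rinv in ln_xc by (try apply Rinv_0_lt_compat; lra).
  rewrite ln_Rinv in ln_c by lra.
  assert (affine_sum : a * (x * / c) + (1 - a) * / c = 1) by (unfold c in *; field; lra).
  assert (exponent_le : a * ln x <= ln c) by nra.
  unfold Rpower; rewrite <- (exp_ln c) by lra.
  destruct exponent_le as [lt|eq]; [left; now apply exp_increasing|right; now rewrite eq].
Qed.

Lemma succ_mul_Rpower_le p a : 0 < p -> 0 <= a <= 1 ->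
  (p + 1) * Rpower p a <= (p + 1 - a) * Rpower (p + 1) a.
Proof.
  intros p_pos a_range.
  assert (split_p : Rpower p a = Rpower (p / (p + 1)) a * Rpower (p + 1) a).
  { rewrite Rpower_mult_distr by (try apply Rdiv_lt_0_compat; lra).
    f_equal; field; lra. }
  pose proof (Rpower_le_affine (p / (p + 1)) a ltac:(apply Rdiv_lt_0_compat; lra) a_range).
  pose proof (Rpower_pos (p + 1) a).
  rewrite split_p.
  replace ((p + 1 - a) * Rpower (p + 1) a)
    with ((p + 1) * ((1 - a + a * (p / (p + 1))) * Rpower (p + 1) a)) by (field; lra).
  apply Rmult_le_compat_l; [lra|].
  apply Rmult_le_compat_r; lra.
Qed.

Section Coefficients.

Variable beta : R.
Hypothesis beta_range : 1 < beta < 2.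

Lemma Psi_neg : Psi beta < 0.
Proof.
  assert (cos (PI * beta / 2) < 0) by (apply cos_lt_0; pose proof PI_RGT_0; nra).
  unfold Psi, Rdiv; rewrite Rmult_1_l; apply Rinv_lt_0_compat; lra.
Qed.

Lemma gcoef_S k : gcoef beta (S k) = gcoef beta k * (INR k - beta) / (INR k + 1).
Proof.
  unfold gcoef; cbn [gbinom pow]; rewrite S_INR.
  pose proof (pos_INR k); field; lra.
Qed.

Lemma gcoef_0 : gcoef beta 0 = 1.
Proof. unfold gcoef; simpl; ring. Qed.

Lemma gcoef_1 : gcoef beta 1 = - beta.
Proof. rewrite gcoef_S, gcoef_0; simpl; field. Qed.

Lemma gcoef_2 : gcoef beta 2 = beta * (beta - 1) / 2.
Proof. rewrite gcoef_S, gcoef_1; simpl; field. Qed.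

Lemma gcoef_pos k : (2 <= k)%nat -> 0 < gcoef beta k.
Proof.
  induction 1 as [|k k2 IH]; [rewrite gcoef_2; nra|].
  rewrite gcoef_S.
  assert (2 <= INR k) by (apply (le_INR 2); exact k2).
  apply Rdiv_lt_0_compat; [apply Rmult_lt_0_compat|]; lra.
Qed.

Lemma rnat_0 : rnat beta 0 = - Psi beta * (beta - 1) * (beta + 2).
Proof. unfold rnat; rewrite gcoef_0, gcoef_1; field. Qed.

Lemma rnat_nonpos m : (1 <= m)%nat -> rnat beta m <= 0.
Proof.
  intros m_pos; pose proof Psi_neg.
  destruct m as [|[|m]]; [lia| |]; unfold rnat.
  - rewrite gcoef_0, gcoef_1, gcoef_2.
    assert (0 < beta / 2 * 1 + (2 - beta) / 2 * - beta + beta / 2 * (beta * (beta - 1) / 2))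
      by nra.
    nra.
  - pose proof (gcoef_pos (S (S (S m))) ltac:(lia)).
    pose proof (gcoef_pos (S (S m)) ltac:(lia)).
    assert (0 < beta / 2 * gcoef beta (S (S (S m))) + (2 - beta) / 2 * gcoef beta (S (S m)))
      by nra.
    nra.
Qed.

Lemma sum_gcoef p : sum_f_R0 (gcoef beta) p = - (INR p + 1) * gcoef beta (S p) / beta.
Proof.
  induction p as [|p IH].
  - simpl; rewrite gcoef_1, gcoef_0; field; lra.
  - rewrite tech5, IH, (gcoef_S (S p)), S_INR.
    pose proof (pos_INR p); field; lra.
Qed.

Lemma sum_gcoef_S p :
  sum_f_R0 (gcoef beta) (S p) = sum_f_R0 (gcoef beta) p * (INR p + 1 - beta) / (INR p + 1).
Proof.
  rewrite !sum_gcoef, (gcoef_S (S p)), !S_INR.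
  pose proof (pos_INR p); field; lra.
Qed.

Lemma sum_gcoef_neg p : (1 <= p)%nat -> sum_f_R0 (gcoef beta) p < 0.
Proof.
  intros p_pos; rewrite sum_gcoef.
  pose proof (gcoef_pos (S p) ltac:(lia)); pose proof (pos_INR p).
  assert (0 < (INR p + 1) * gcoef beta (S p) / beta)
    by (apply Rdiv_lt_0_compat; [apply Rmult_lt_0_compat|]; lra).
  unfold Rdiv in *; rewrite Ropp_mult_distr_l_reverse, Ropp_mult_distr_l_reverse; lra.
Qed.

Lemma sum_rnat N : (1 <= N)%nat ->
  2 * sum_f_R0 (rnat beta) N - rnat beta 0
  = 2 * Psi beta * (beta / 2 * sum_f_R0 (gcoef beta) (S N)
                    + (2 - beta) / 2 * sum_f_R0 (gcoef beta) N).
Proof.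
  induction 1 as [|[|k] k_pos IH]; [cbn [sum_f_R0]; unfold rnat; ring|lia|].
  rewrite tech5, (tech5 _ (S (S k))).
  change (rnat beta (S (S k)))
    with (Psi beta * (beta / 2 * gcoef beta (S (S (S k))) + (2 - beta) / 2 * gcoef beta (S (S k)))).
  rewrite (tech5 _ (S k)) in IH |- *.
  lra.
Qed.

(* The weight (p+1) p^(beta-1) ~ p^beta is chosen so that the Bernoulli step
   [succ_mul_Rpower_le] makes the sequence nondecreasing; with (p+2)^beta it is not. *)
Lemma neg_sum_gcoef_weighted_ge p : (1 <= p)%nat ->
  (beta - 1) * (2 - beta)
  <= - sum_f_R0 (gcoef beta) (S p) * (INR p + 1) * Rpower (INR p) (beta - 1).
Proof.
  induction 1 as [|p p_pos IH].
  - cbn [sum_f_R0 INR]; rewrite gcoef_0, gcoef_1, gcoef_2.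
    unfold Rpower; rewrite ln_1, Rmult_0_r, exp_0; apply Req_le; field.
  - assert (p_ge1 : 1 <= INR p) by (apply (le_INR 1); exact p_pos).
    pose proof (sum_gcoef_neg (S p) ltac:(lia)).
    pose proof (succ_mul_Rpower_le (INR p) (beta - 1) ltac:(lra) ltac:(lra)) as step.
    rewrite sum_gcoef_S, S_INR.
    replace (- (sum_f_R0 (gcoef beta) (S p) * (INR p + 1 + 1 - beta) / (INR p + 1 + 1))
             * (INR p + 1 + 1) * Rpower (INR p + 1) (beta - 1))
      with (- sum_f_R0 (gcoef beta) (S p) * ((INR p + 1 - (beta - 1)) * Rpower (INR p + 1) (beta - 1)))
      by (field; lra).
    rewrite Rmult_assoc in IH.
    eapply Rle_trans; [exact IH|].
    apply Rmult_le_compat_l; lra.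
Qed.

Lemma neg_sum_gcoef_Rpower_ge p x : (1 <= p)%nat -> INR p + 1 <= x ->
  (beta - 1) * (2 - beta) <= - sum_f_R0 (gcoef beta) p * Rpower x beta.
Proof.
  intros p_pos px; pose proof (pos_INR p).
  assert (split_x : Rpower x beta = x * Rpower x (beta - 1)).
  { replace beta with (1 + (beta - 1)) at 1 by ring.
    rewrite Rpower_plus, Rpower_1 by lra; reflexivity. }
  destruct p as [|[|q]]; [lia| |].
  - cbn [sum_f_R0]; rewrite gcoef_0, gcoef_1.
    assert (x <= Rpower x beta)
      by (rewrite split_x; pose proof (Rle_Rpower x 0 (beta - 1)); rewrite Rpower_O in *; nra).
    simpl INR in px; nra.
  - pose proof (neg_sum_gcoef_weighted_ge (S q) ltac:(lia)) as tail.
    pose proof (sum_gcoef_neg (S (S q)) ltac:(lia)).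
    assert (q_ge1 : 1 <= INR (S q)) by (apply (le_INR 1); lia).
    rewrite S_INR in px.
    assert (power_le : Rpower (INR (S q)) (beta - 1) <= Rpower x (beta - 1))
      by (apply Rle_Rpower_l; lra).
    pose proof (Rpower_pos (INR (S q)) (beta - 1)).
    rewrite split_x, Rmult_assoc in *.
    eapply Rle_trans; [exact tail|].
    apply Rmult_le_compat_l; [lra|].
    apply Rmult_le_compat; lra.
Qed.

Lemma sum_rnat_scaled_ge N :
  2 * (beta - 1) * (2 - beta) * - Psi beta
  <= (2 * sum_f_R0 (rnat beta) N - rnat beta 0) * Rpower (INR N + 2) beta.
Proof.
  pose proof Psi_neg; pose proof (pos_INR N).
  destruct N as [|N].
  - assert (2 <= Rpower (INR 0 + 2) beta).
    { rewrite <- (Rpower_1 2) at 1 by lra.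
      simpl INR; rewrite Rplus_0_l; apply Rle_Rpower; lra. }
    cbn [sum_f_R0]; rewrite rnat_0.
    assert (0 < - Psi beta * (beta - 1)) by nra.
    assert (- Psi beta * (beta - 1) * (beta + 2) * 2
            <= - Psi beta * (beta - 1) * (beta + 2) * Rpower (INR 0 + 2) beta)
      by (apply Rmult_le_compat_l; nra).
    nra.
  - rewrite sum_rnat by lia.
    pose proof (neg_sum_gcoef_Rpower_ge (S (S N)) (INR (S N) + 2) ltac:(lia) ltac:(rewrite !S_INR; lra)).
    pose proof (neg_sum_gcoef_Rpower_ge (S N) (INR (S N) + 2) ltac:(lia) ltac:(lra)).
    set (X := Rpower (INR (S N) + 2) beta) in *.
    assert (2 * ((beta - 1) * (2 - beta))
            <= beta * (- sum_f_R0 (gcoef beta) (S (S N)) * X)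
               + (2 - beta) * (- sum_f_R0 (gcoef beta) (S N) * X)) by nra.
    nra.
Qed.

(* Crude bounds: 3 - beta <= 2, 4^beta <= 16 and e^(9/4) >= (7/4)^3 > 16/3. *)
Lemma cstar_le : cstar beta <= 2 * (beta - 1) * (2 - beta) * - Psi beta.
Proof.
  pose proof Psi_neg.
  assert (power_le : Rpower 4 beta <= 16).
  { replace 16 with (Rpower 4 (INR 2)) by (rewrite Rpower_pow by lra; simpl; ring).
    apply Rle_Rpower; simpl; lra. }
  assert (exp_ge : 16 / 3 <= exp (9 / 4)).
  { replace (9 / 4) with (3 / 4 + 3 / 4 + 3 / 4) by field.
    rewrite !exp_plus.
    pose proof (exp_ineq1_le (3 / 4)).
    assert (7 / 4 * (7 / 4) <= exp (3 / 4) * exp (3 / 4)) by (apply Rmult_le_compat; lra).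
    assert (7 / 4 * (7 / 4) * (7 / 4) <= exp (3 / 4) * exp (3 / 4) * exp (3 / 4))
      by (apply Rmult_le_compat; lra).
    lra. }
  assert (factor_le : (3 - beta) * Rpower 4 beta * exp (- (9 / 4)) / 3 <= 2).
  { rewrite exp_Ropp.
    pose proof (Rpower_pos 4 beta); pose proof (exp_pos (9 / 4)).
    apply Rmult_le_reg_r with (3 * exp (9 / 4)); [lra|].
    replace ((3 - beta) * Rpower 4 beta * / exp (9 / 4) / 3 * (3 * exp (9 / 4)))
      with ((3 - beta) * Rpower 4 beta) by (field; lra).
    nra. }
  assert (0 < (beta - 1) * (2 - beta) * - Psi beta) by (apply Rmult_lt_0_compat; nra).
  replace (cstar beta)
    with ((beta - 1) * (2 - beta) * - Psi beta * ((3 - beta) * Rpower 4 beta * exp (- (9 / 4)) / 3))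
    by (unfold cstar; field).
  nra.
Qed.

Lemma rnat_form_bounds N w :
  cstar beta * sum_f_R0 (fun j => w j ^ 2) N
  <= Rpower (INR N + 2) beta * quad_form (toeplitz (rnat beta)) w N
  /\ quad_form (toeplitz (rnat beta)) w N
     <= 2 * rnat beta 0 * sum_f_R0 (fun j => w j ^ 2) N.
Proof.
  set (lambda := 2 * sum_f_R0 (rnat beta) N - rnat beta 0).
  pose proof (toeplitz_form_ge (rnat beta) rnat_nonpos N w) as lower.
  pose proof (sum_rnat_scaled_ge N) as scaled; fold lambda in lower, scaled.
  pose proof cstar_le; pose proof Psi_neg.
  pose proof (Rpower_pos (INR N + 2) beta).
  assert (X_nonneg : 0 <= sum_f_R0 (fun j => w j ^ 2) N)
    by (apply cond_pos_sum; intros; apply pow2_ge_0).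
  assert (lambda_nonneg : 0 <= lambda).
  { assert (0 < 2 * (beta - 1) * (2 - beta) * - Psi beta) by (repeat apply Rmult_lt_0_compat; lra).
    destruct (Rle_lt_dec 0 lambda); [assumption|nra]. }
  split; [|exact (toeplitz_form_le _ rnat_nonpos N w lambda_nonneg)].
  apply Rle_trans with (Rpower (INR N + 2) beta * (lambda * sum_f_R0 (fun j => w j ^ 2) N)).
  - rewrite <- Rmult_assoc, (Rmult_comm _ lambda).
    apply Rmult_le_compat_r; lra.
  - apply Rmult_le_compat_l; lra.
Qed.

End Coefficients.

Lemma Rpower_div_1_minus A B c : 0 < A -> 0 < B ->
  Rpower (A / B) (1 - c) = A / B * Rpower B c / Rpower A c.
Proof.
  intros A_pos B_pos.
  assert (quotient_pos : 0 < A / B) by (apply Rdiv_lt_0_compat; assumption).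
  assert (distr : Rpower (A / B) c * Rpower B c = Rpower A c)
    by (rewrite Rpower_mult_distr by assumption; f_equal; field; lra).
  pose proof (Rpower_pos (A / B) c); pose proof (Rpower_pos B c).
  replace (1 - c) with (1 + - c) by ring.
  rewrite Rpower_plus, Rpower_1, Rpower_Ropp, <- distr by assumption.
  field; lra.
Qed.

Lemma sum_f_1_interior (F : nat -> R) N :
  sum_f 1 (S (S N) - 1) F = sum_f_R0 (fun j => F (S j)) N.
Proof.
  unfold sum_f; replace (S (S N) - 1 - 1)%nat with N by lia.
  apply sum_eq; intros; f_equal; lia.
Qed.

Lemma sum_f_R0_interior (F : nat -> R) N : F 0%nat = 0 -> F (S (S N)) = 0 ->
  sum_f_R0 F (S (S N)) = sum_f_R0 (fun i => F (S i)) N.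
Proof.
  intros F0 FM; rewrite tech5, FM, decomp_sum, F0 by lia.
  simpl pred; ring.
Qed.

Lemma rcoef_form_interior beta N (v : nat -> R) : v 0%nat = 0 -> v (S (S N)) = 0 ->
  sum_f 1 (S (S N) - 1)
    (fun j => sum_f_R0 (fun k => rcoef beta (Z.of_nat j - Z.of_nat k) * v k) (S (S N)) * v j)
  = quad_form (toeplitz (rnat beta)) (fun i => v (S i)) N.
Proof.
  intros v0 vM; rewrite sum_f_1_interior; apply sum_eq; intros j _.
  rewrite sum_f_R0_interior by (rewrite ?v0, ?vM; ring).
  f_equal; apply sum_eq; intros i _.
  unfold rcoef, toeplitz; do 3 f_equal; lia.
Qed.

Theorem lemma3p3 (a b beta : R) (M : nat) (v : nat -> R) :
  a < b -> 1 < beta < 2 -> (2 <= M)%nat ->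
  v 0%nat = 0 -> v M = 0 ->
  let h := (b - a) / INR M in
  cstar beta / Rpower (b - a) beta * h * sum_f 1 (M - 1) (fun j => (v j) ^ 2)
  <= Rpower h (1 - beta) *
     sum_f 1 (M - 1)
       (fun j => sum_f_R0 (fun k => rcoef beta (Z.of_nat j - Z.of_nat k) * v k) M * v j)
  /\
  Rpower h (1 - beta) *
     sum_f 1 (M - 1)
       (fun j => sum_f_R0 (fun k => rcoef beta (Z.of_nat j - Z.of_nat k) * v k) M * v j)
  <= 2 * rcoef beta 0 * Rpower h (1 - beta) * sum_f 1 (M - 1) (fun j => (v j) ^ 2).
Proof.
  intros ab beta_range M_ge2 v0 vM h.
  destruct M as [|[|N]]; [lia|lia|].
  rewrite rcoef_form_interior, sum_f_1_interior by assumption.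
  destruct (rnat_form_bounds beta beta_range N (fun i => v (S i))) as [lower upper].
  unfold h; rewrite Rpower_div_1_minus by (try apply lt_0_INR; lia || lra).
  replace (INR (S (S N))) with (INR N + 2) by (rewrite !S_INR; ring).
  pose proof (pos_INR N); pose proof (Rpower_pos (b - a) beta).
  pose proof (Rpower_pos (INR N + 2) beta).
  set (D := (b - a) / (INR N + 2) / Rpower (b - a) beta).
  assert (D_pos : 0 < D) by (repeat apply Rdiv_lt_0_compat; lra).
  replace ((b - a) / (INR N + 2) * Rpower (INR N + 2) beta / Rpower (b - a) beta)
    with (D * Rpower (INR N + 2) beta) by (unfold D; field; lra).
  replace (cstar beta / Rpower (b - a) beta * ((b - a) / (INR N + 2)))
    with (D * cstar beta) by (unfold D; field; lra).
  change (rcoef beta 0) with (rnat beta 0).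
  split.
  - rewrite !Rmult_assoc; apply Rmult_le_compat_l; lra.
  - rewrite (Rmult_comm _ (D * _)), !Rmult_assoc.
    apply Rmult_le_compat_l; [lra|].
    apply Rmult_le_compat_l; lra.
Qed.
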